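(* Let $A_\star\in\mathbb{R}^{n\times n}$. For any vector $x\in\mathbb{R}^n$ and any integer $k\ge n$, $$\{A\in\mathbb{R}^{n\times n}\mid Ax=A_\star x,\ A^2x=A_\star^2x,\dots,A^kx=A_\star^kx\}=\{A\in\mathbb{R}^{n\times n}\mid Ax=A_\star x,\ A^2x=A_\star^2x,\dots,A^nx=A_\star^nx\}.$$ *)

From mathcomp Require Import all_boot all_algebra.
From mathcomp Require Import classical_sets reals.
Set Implicit Arguments. Unset Strict Implicit. Unset Printing Implicit Defensive.
Import GRing.Theory Num.Theory.
Local Open Scope ring_scope.
Local Open Scope classical_set_scope.

Definition moment_match_set (R : realType) (n : nat) (Astar : 'M[R]_n)
  (x : 'cV[R]_n) (k : nat) : set 'M[R]_n :=
  [set A | forall i : nat, (1 <= i <= k)%N -> A ^+ i *m x = Astar ^+ i *m x].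

From mathcomp Require Import all_boot all_algebra.
From mathcomp Require Import classical_sets reals.
Local Open Scope ring_scope.
Import GRing.Theory Pdiv.Ring Pdiv.RingMonic.

(* Write B for A_star.  If A^i x = B^i x for 1 <= i <= n, then A and B agree
   on the Krylov vectors B^i x with i < n, hence on every p(B) x with
   deg p < n.  Reducing X^e modulo the characteristic polynomial of B
   (Cayley-Hamilton) shows that every B^e x is of this form, so
   A (B^e x) = B^(e+1) x for all e, and induction on e gives A^e x = B^e x. *)

Section PowerAgreement.

Variables (R : pzRingType) (n : nat) (A B : 'M[R]_n) (x : 'cV[R]_n).

Lemma mulmx_exprS (C : 'M[R]_n) i : C *m (C ^+ i *m x) = C ^+ i.+1 *m x.
Proof. by rewrite exprS mulmxA. Qed.

Lemma expmx_mulmx_eqP m :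
  (forall i, (i <= m)%N -> A ^+ i *m x = B ^+ i *m x) <->
  (forall i, (i < m)%N -> A *m (B ^+ i *m x) = B *m (B ^+ i *m x)).
Proof.
split=> [eqAB i lt_im | agree].
  rewrite -[in LHS]eqAB; last exact: ltnW.
  by rewrite (mulmx_exprS A) (mulmx_exprS B); apply: eqAB.
elim=> [|i IHi] lt_im; first by rewrite !expr0.
rewrite -(mulmx_exprS A) -(mulmx_exprS B) IHi; last exact: ltnW.
exact: agree.
Qed.

End PowerAgreement.

Section KrylovAgreement.

Variables (R : comNzRingType) (n : nat) (A B : 'M[R]_n.+1) (x : 'cV[R]_n.+1).

Lemma horner_mx_rmodp_char_poly (p : {poly R}) :
  horner_mx B (rmodp p (char_poly B)) = horner_mx B p.
Proof.
rewrite {2}(rdivp_eq (char_poly_monic B) p).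
by rewrite rmorphD rmorphM /= Cayley_Hamilton mulr0 add0r.
Qed.

Hypothesis agree :
  forall i, (i <= n)%N -> A *m (B ^+ i *m x) = B *m (B ^+ i *m x).

Lemma mulmx_horner_mx_agree (p : {poly R}) : (size p <= n.+1)%N ->
  A *m (horner_mx B p *m x) = B *m (horner_mx B p *m x).
Proof.
move=> le_p_n; rewrite -(coefK p) poly_def rmorph_sum /= !mulmx_suml !mulmx_sumr.
apply: eq_bigr => i _; rewrite linearZ rmorphXn /= horner_mx_X.
rewrite -!scalemxAl -!scalemxAr agree; first by [].
by rewrite -ltnS (leq_trans (ltn_ord i)).
Qed.

Lemma mulmx_expr_agree e : A *m (B ^+ e *m x) = B *m (B ^+ e *m x).
Proof.
have -> : B ^+ e = horner_mx B (rmodp 'X^e (char_poly B)).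
  by rewrite horner_mx_rmodp_char_poly rmorphXn /= horner_mx_X.
apply: mulmx_horner_mx_agree.
by rewrite -ltnS -(size_char_poly B) ltn_rmodp monic_neq0 // char_poly_monic.
Qed.

End KrylovAgreement.

Lemma expmx_mulmx_eq_all (R : comNzRingType) n (A B : 'M[R]_n.+1)
    (x : 'cV[R]_n.+1) :
  (forall i, (i <= n.+1)%N -> A ^+ i *m x = B ^+ i *m x) ->
  forall e, A ^+ e *m x = B ^+ e *m x.
Proof.
move=> /expmx_mulmx_eqP agree e.
have /(@expmx_mulmx_eqP _ _ A B x e) eqAB : forall i, (i < e)%N ->
    A *m (B ^+ i *m x) = B *m (B ^+ i *m x).
  by move=> i _; apply: mulmx_expr_agree => j le_jn; apply: agree.
exact: eqAB.
Qed.

Theorem proposition14 (R : realType) (n : nat) (Astar : 'M[R]_n)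
  (x : 'cV[R]_n) (k : nat) :
  (n <= k)%N ->
  moment_match_set Astar x k = moment_match_set Astar x n.
Proof.
move=> le_nk; apply/seteqP; split=> A /= eqA i /andP[i_gt0 le_i].
  by apply: eqA; rewrite i_gt0 (leq_trans le_i le_nk).
case: n Astar x A le_nk eqA le_i => [|n] Astar x A _ eqA _.
  by rewrite !flatmx0.
apply: expmx_mulmx_eq_all => -[|j] le_j; first by rewrite !expr0.
exact: eqA.
Qed.
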